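(* Let $a\in\mathbb{R}$ and let $\alpha_0,\alpha_1,\alpha_2,\alpha_3>0$ be fixed. For $b>a$, $A>0$, $B>0$ define \[ Q_0(x)=\begin{cases} A, & a\le x<b,\\ -B, & b\le x,\end{cases} \] and let $u$ be the solution of \[ u''''(x)+Q_0(x)u(x)=0,\qquad x>a, \] satisfying $u(a)=\alpha_0$, $u'(a)=\alpha_1$, $u''(a)=\alpha_2$, $u'''(a)=\alpha_3$. Then (given $a$) one can choose $b>a$, $A>0$ and $B>0$ such that \[ u'(\zeta)=u'''(\zeta)=0 \] for some $\zeta\in(b,\infty)$.
   Context: Since $Q_0$ is piecewise constant, the solution $u$ is understood as the function $u\in C^3[a,\infty)$ which satisfies the differential equation on each of the intervals $(a,b)$ and $(b,\infty)$ (equivalently, $u'''$ is absolutely continuous and the equation holds almost everywhere). *)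

From Stdlib Require Import Reals.
From Coquelicot Require Import Coquelicot.
Open Scope R_scope.

Definition Q0 (a b A B : R) (x : R) : R :=
  if Rlt_dec x b then A else - B.

(* [is_solution a b A B al0 al1 al2 al3 u u1 u2 u3]:
   u is a C^3 function on [a, oo) with u' = u1, u'' = u2, u''' = u3,
   u''' differentiable on (a,b) and on (b,oo) with u'''' + Q0 u = 0 there,
   and initial data u^(k)(a) = al_k.  Derivatives at the endpoint a are
   one-sided; they are encoded by right-continuity of u, u1, u2, u3 at a
   (which, together with the interior derivative relations, is equivalent
   to u in C^3[a, oo)). *)
Definition is_solution (a b A B al0 al1 al2 al3 : R)
    (u u1 u2 u3 : R -> R) : Prop :=
  (forall x, a < x ->
     is_derive u x (u1 x) /\ is_derive u1 x (u2 x) /\ is_derive u2 x (u3 x)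
     /\ continuous u3 x) /\
  filterlim u (at_right a) (locally (u a)) /\
  filterlim u1 (at_right a) (locally (u1 a)) /\
  filterlim u2 (at_right a) (locally (u2 a)) /\
  filterlim u3 (at_right a) (locally (u3 a)) /\
  (forall x, a < x -> x <> b -> is_derive u3 x (- (Q0 a b A B x * u x))) /\
  u a = al0 /\ u1 a = al1 /\ u2 a = al2 /\ u3 a = al3.

From Stdlib Require Import Reals Lra.
From Coquelicot Require Import Coquelicot.
Open Scope R_scope.

(* Choose [b - a = 2 pi mu] and [A = 4 / mu ^ 4], so that on [[a, b]] the solution is an explicit
   combination of [cosh t cos t], [cosh t sin t], [sinh t cos t], [sinh t sin t] with
   [t = (x - a) / mu], and its Cauchy data at [b] are polynomials in [mu].  On [[b, oo)] with
   [B = k ^ 4] the solution is a combination of [cosh s], [sinh s], [cos s], [sin s] with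
   [s = k (x - b)].  Taking [k ^ 2 = u''(b) / u(b)] removes the [cos s] term, and then
   [u'] and [u'''] vanish together at [s = pi / 2] under a single equation in [mu].  That
   equation has a root by the intermediate value theorem: its defect is negative at [mu = 0]
   and positive once [u(b) <= 0].  Every solution coincides with the glued one, because for
   the difference [w] of two solutions [(w ^ 2 + w' ^ 2 + w'' ^ 2 + w''' ^ 2) e ^ (-(2 + A + B) x)]
   is nonincreasing and tends to [0] at [a]. *)

Definition is_ode4_sol (c : R) (f0 f1 f2 f3 : R -> R) : Prop :=
  (forall x, is_derive f0 x (f1 x)) /\ (forall x, is_derive f1 x (f2 x)) /\
  (forall x, is_derive f2 x (f3 x)) /\ (forall x, is_derive f3 x (- (c * f0 x))).

Definition rescale (m a : R) (n : nat) (f : R -> R) (x : R) : R :=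
  m ^ n * f (m * (x - a)).

Lemma is_ode4_sol_rescale c m a f0 f1 f2 f3 :
  is_ode4_sol c f0 f1 f2 f3 ->
  is_ode4_sol (c * m ^ 4) (rescale m a 0 f0) (rescale m a 1 f1)
    (rescale m a 2 f2) (rescale m a 3 f3).
Proof.
  intros [D0 [D1 [D2 D3]]].
  assert (Hchain : forall n f df x, (forall t, is_derive f t (df t)) ->
    is_derive (rescale m a n f) x (m ^ S n * df (m * (x - a)))).
  { intros n f df x Hd. unfold rescale.
    replace (m ^ S n * df (m * (x - a))) with (m ^ n * (m * df (m * (x - a)))) by (simpl; ring).
    apply is_derive_scal, (is_derive_comp f (fun x => m * (x - a))); [apply Hd|].
    auto_derive; [auto|ring]. }
  split; [|split; [|split]]; intros x.
  - exact (Hchain 0%nat f0 f1 x D0).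
  - exact (Hchain 1%nat f1 f2 x D1).
  - exact (Hchain 2%nat f2 f3 x D2).
  - replace (- (c * m ^ 4 * rescale m a 0 f0 x)) with (m ^ 4 * - (c * f0 (m * (x - a))))
      by (unfold rescale; ring).
    exact (Hchain 3%nat f3 (fun t => - (c * f0 t)) x D3).
Qed.

(* [osc c0 c1 c2 c3] solves [y'''' + 4 y = 0] and [hyp y0 y1 y2 y3] solves [y'''' = y],
   both with [y^(j)(0)] equal to the [j]-th parameter. *)
Definition osc (c0 c1 c2 c3 t : R) : R :=
  c0 * (cosh t * cos t) + c1 * (cosh t * sin t + sinh t * cos t) / 2
  + c2 * (sinh t * sin t) / 2 + c3 * (cosh t * sin t - sinh t * cos t) / 4.

Definition hyp (y0 y1 y2 y3 t : R) : R :=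
  (y0 + y2) / 2 * cosh t + (y1 + y3) / 2 * sinh t
  + (y0 - y2) / 2 * cos t + (y1 - y3) / 2 * sin t.

Lemma is_derive_osc c0 c1 c2 c3 t :
  is_derive (osc c0 c1 c2 c3) t (osc c1 c2 c3 (-4 * c0) t).
Proof. unfold osc. auto_derive; [auto | field]. Qed.

Lemma is_derive_hyp y0 y1 y2 y3 t :
  is_derive (hyp y0 y1 y2 y3) t (hyp y1 y2 y3 y0 t).
Proof. unfold hyp. auto_derive; [auto | field]. Qed.

Lemma is_ode4_sol_osc c0 c1 c2 c3 :
  is_ode4_sol 4 (osc c0 c1 c2 c3) (osc c1 c2 c3 (-4 * c0))
    (osc c2 c3 (-4 * c0) (-4 * c1)) (osc c3 (-4 * c0) (-4 * c1) (-4 * c2)).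
Proof.
  split; [|split; [|split]]; intros x; try apply is_derive_osc.
  replace (- (4 * osc c0 c1 c2 c3 x)) with (osc (-4 * c0) (-4 * c1) (-4 * c2) (-4 * c3) x)
    by (unfold osc; field).
  apply is_derive_osc.
Qed.

Lemma is_ode4_sol_hyp y0 y1 y2 y3 :
  is_ode4_sol (-1) (hyp y0 y1 y2 y3) (hyp y1 y2 y3 y0) (hyp y2 y3 y0 y1) (hyp y3 y0 y1 y2).
Proof.
  split; [|split; [|split]]; intros x; try apply is_derive_hyp.
  replace (- (-1 * hyp y0 y1 y2 y3 x)) with (hyp y0 y1 y2 y3 x) by ring.
  apply is_derive_hyp.
Qed.

Lemma osc_0 c0 c1 c2 c3 : osc c0 c1 c2 c3 0 = c0.
Proof. unfold osc. rewrite cosh_0, sinh_0, cos_0, sin_0. field. Qed.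

Lemma osc_2PI c0 c1 c2 c3 :
  osc c0 c1 c2 c3 (2 * PI) = c0 * cosh (2 * PI) + c1 * sinh (2 * PI) / 2 - c3 * sinh (2 * PI) / 4.
Proof. unfold osc. rewrite cos_2PI, sin_2PI. field. Qed.

Lemma hyp_0 y0 y1 y2 y3 : hyp y0 y1 y2 y3 0 = y0.
Proof. unfold hyp. rewrite cosh_0, sinh_0, cos_0, sin_0. field. Qed.

Lemma hyp_PI2_critical y0 y1 y2 y3 :
  y2 = y0 -> (y1 + y3) * cosh (PI / 2) + 2 * y0 * sinh (PI / 2) = 0 ->
  hyp y1 y2 y3 y0 (PI / 2) = 0 /\ hyp y3 y0 y1 y2 (PI / 2) = 0.
Proof.
  intros -> H. unfold hyp. rewrite cos_PI2, sin_PI2. split; lra.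
Qed.

Definition glue (f g : R -> R) (b x : R) : R := if Rlt_dec x b then f x else g x.

Lemma glue_at_b (f g : R -> R) b : glue f g b b = g b.
Proof. unfold glue. destruct (Rlt_dec b b); [lra | reflexivity]. Qed.

Section Glue.

Variables (f g : R -> R) (b : R).

Lemma glue_eq_left x : x < b -> locally x (fun t => f t = glue f g b t).
Proof.
  intros Hx. apply (filter_imp (fun t => t < b)); [|exact (open_lt b x Hx)].
  intros t Ht. unfold glue. destruct (Rlt_dec t b); [reflexivity | lra].
Qed.

Lemma glue_eq_right x : b < x -> locally x (fun t => g t = glue f g b t).
Proof.
  intros Hx. apply (filter_imp (fun t => b < t)); [|exact (open_gt b x Hx)].
  intros t Ht. unfold glue. destruct (Rlt_dec t b); [lra | reflexivity].
Qed.

Lemma locally_glue (P : R -> R -> Prop) :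
  locally b (fun t => P t (f t)) -> locally b (fun t => P t (g t)) ->
  locally b (fun t => P t (glue f g b t)).
Proof.
  intros Hf Hg. generalize (filter_and _ _ Hf Hg). apply filter_imp.
  intros t Ht. unfold glue. destruct (Rlt_dec t b); apply Ht.
Qed.

Lemma glue_derive_off (df dg : R -> R) x :
  x <> b -> (forall t, is_derive f t (df t)) -> (forall t, is_derive g t (dg t)) ->
  is_derive (glue f g b) x (glue df dg b x).
Proof.
  intros Hx Hf Hg. unfold glue at 2. destruct (Rlt_dec x b) as [Hl | Hr].
  - apply (is_derive_ext_loc f); [apply glue_eq_left, Hl | apply Hf].
  - apply (is_derive_ext_loc g); [apply glue_eq_right; lra | apply Hg].
Qed.

Hypothesis Hfg : f b = g b.

Lemma glue_continuous x :
  (forall t, continuous f t) -> (forall t, continuous g t) -> continuous (glue f g b) x.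
Proof.
  intros Hf Hg. destruct (Rtotal_order x b) as [Hx | [-> | Hx]].
  - apply (continuous_ext_loc _ f); [apply glue_eq_left, Hx | apply Hf].
  - apply filterlim_locally. intros eps. rewrite glue_at_b.
    apply (locally_glue (fun _ v => ball (g b) eps v));
      apply filterlim_locally; [rewrite <- Hfg; apply Hf | apply Hg].
  - apply (continuous_ext_loc _ g); [apply glue_eq_right, Hx | apply Hg].
Qed.

Lemma glue_derive (df dg : R -> R) x :
  (forall t, is_derive f t (df t)) -> (forall t, is_derive g t (dg t)) -> df b = dg b ->
  is_derive (glue f g b) x (glue df dg b x).
Proof.
  intros Hf Hg Hd. destruct (Req_dec x b) as [-> | Hx]; [|apply glue_derive_off; auto].
  rewrite glue_at_b. destruct (Hf b) as [_ Hf']. destruct (Hg b) as [_ Hg'].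
  split; [apply is_linear_scal_l|]. intros y Hy eps.
  apply (@is_filter_lim_locally_unique _ R_NormedModule) in Hy. rewrite <- Hy, glue_at_b.
  apply (locally_glue (fun t v => norm (minus (minus v (g b)) (scal (minus t b) (dg b)))
                                   <= eps * norm (minus t b))).
  - rewrite <- Hfg, <- Hd. apply (Hf' b (fun P HP => HP) eps).
  - apply (Hg' b (fun P HP => HP) eps).
Qed.

End Glue.

Lemma is_ode4_sol_continuous c f0 f1 f2 f3 :
  is_ode4_sol c f0 f1 f2 f3 ->
  (forall x, continuous f0 x) /\ (forall x, continuous f1 x) /\
  (forall x, continuous f2 x) /\ (forall x, continuous f3 x).
Proof.
  intros [D0 [D1 [D2 D3]]].
  split; [|split; [|split]]; intros x;
    apply (@ex_derive_continuous R_AbsRing R_NormedModule); eexists; eauto.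
Qed.

Lemma is_solution_glue a b A B al0 al1 al2 al3 f0 f1 f2 f3 g0 g1 g2 g3 :
  a < b -> is_ode4_sol A f0 f1 f2 f3 -> is_ode4_sol (- B) g0 g1 g2 g3 ->
  f0 b = g0 b -> f1 b = g1 b -> f2 b = g2 b -> f3 b = g3 b ->
  f0 a = al0 -> f1 a = al1 -> f2 a = al2 -> f3 a = al3 ->
  is_solution a b A B al0 al1 al2 al3
    (glue f0 g0 b) (glue f1 g1 b) (glue f2 g2 b) (glue f3 g3 b).
Proof.
  intros Hab Hf Hg E0 E1 E2 E3 I0 I1 I2 I3.
  pose proof Hf as [Df0 [Df1 [Df2 Df3]]]. pose proof Hg as [Dg0 [Dg1 [Dg2 Dg3]]].
  destruct (is_ode4_sol_continuous _ _ _ _ _ Hf) as [Cf0 [Cf1 [Cf2 Cf3]]].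
  destruct (is_ode4_sol_continuous _ _ _ _ _ Hg) as [Cg0 [Cg1 [Cg2 Cg3]]].
  assert (Hright : forall h k, (forall t, continuous h t) -> (forall t, continuous k t) ->
    h b = k b -> filterlim (glue h k b) (at_right a) (locally (glue h k b a))).
  { intros h k Hh Hk Ehk. apply (filterlim_filter_le_1 _ (filter_le_within _)).
    apply glue_continuous; assumption. }
  assert (Hleft : forall h k, glue h k b a = h a).
  { intros h k. unfold glue. destruct (Rlt_dec a b); [reflexivity | lra]. }
  split; [|split; [|split; [|split; [|split; [|split]]]]].
  - intros x _. split; [|split; [|split]].
    + exact (glue_derive _ _ _ E0 _ _ x Df0 Dg0 E1).
    + exact (glue_derive _ _ _ E1 _ _ x Df1 Dg1 E2).
    + exact (glue_derive _ _ _ E2 _ _ x Df2 Dg2 E3).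
    + exact (glue_continuous _ _ _ E3 x Cf3 Cg3).
  - exact (Hright f0 g0 Cf0 Cg0 E0).
  - exact (Hright f1 g1 Cf1 Cg1 E1).
  - exact (Hright f2 g2 Cf2 Cg2 E2).
  - exact (Hright f3 g3 Cf3 Cg3 E3).
  - intros x _ Hxb.
    replace (- (Q0 a b A B x * glue f0 g0 b x))
      with (glue (fun t => - (A * f0 t)) (fun t => - (- B * g0 t)) b x)
      by (unfold glue, Q0; destruct (Rlt_dec x b); ring).
    exact (glue_derive_off _ _ _ _ _ x Hxb Df3 Dg3).
  - rewrite !Hleft. repeat split; assumption.
Qed.

Lemma nonincreasing_of_derive_nonpos (F dF : R -> R) a b :
  (forall x, a < x -> continuity_pt F x) ->
  (forall x, a < x -> x <> b -> is_derive F x (dF x)) ->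
  (forall x, a < x -> dF x <= 0) ->
  forall x y, a < x -> x <= y -> F y <= F x.
Proof.
  intros HC HD Hneg.
  assert (Hpiece : forall x y, a < x -> x <= y -> y <= b \/ b <= x -> F y <= F x).
  { intros x y Hx Hxy Hb. destruct (MVT_gen F x y dF) as [c [Hc E]]; cbv zeta in *;
      rewrite ?Rmin_left, ?Rmax_right in * by lra.
    - intros t Ht. apply HD; lra.
    - intros t Ht. apply HC; lra.
    - assert (dF c <= 0) by (apply Hneg; lra). nra. }
  intros x y Hx Hxy. destruct (Rle_dec y b), (Rle_dec b x); try (apply Hpiece; lra).
  apply Rle_trans with (F b); apply Hpiece; lra.
Qed.

Lemma le_of_nonincreasing_at_right (F : R -> R) a l y :
  a < y -> (forall x, a < x -> x <= y -> F y <= F x) ->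
  filterlim F (at_right a) (locally l) -> F y <= l.
Proof.
  intros Hy Hmono Hlim. apply Rnot_lt_le. intros Hl.
  assert (Heps : 0 < F y - l) by lra.
  assert (Hnear : at_right a (fun x => (a < x /\ x <= y) /\ ball l (mkposreal _ Heps) (F x))).
  { apply filter_and; [| apply (proj1 (filterlim_locally _ _) Hlim)].
    assert (Hd : 0 < y - a) by lra. exists (mkposreal _ Hd). intros x Hx Hax.
    apply Rabs_lt_between' in Hx. simpl in Hx. lra. }
  destruct (Hierarchy.filter_ex _ Hnear) as [x [[Hax Hxy] Hx]].
  apply Rabs_lt_between' in Hx. simpl in Hx.
  specialize (Hmono x Hax Hxy). lra.
Qed.

Lemma filterlim_Rplus {T} {F : (T -> Prop) -> Prop} {FF : Filter F} (f g : T -> R) l m :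
  filterlim f F (locally l) -> filterlim g F (locally m) ->
  filterlim (fun t => f t + g t) F (locally (l + m)).
Proof. intros Hf Hg. exact (filterlim_comp_2 f g Rplus Hf Hg (filterlim_plus l m)). Qed.

Lemma filterlim_Rmult {T} {F : (T -> Prop) -> Prop} {FF : Filter F} (f g : T -> R) l m :
  filterlim f F (locally l) -> filterlim g F (locally m) ->
  filterlim (fun t => f t * g t) F (locally (l * m)).
Proof. intros Hf Hg. exact (filterlim_comp_2 f g Rmult Hf Hg (@filterlim_mult R_AbsRing l m)). Qed.

Lemma continuous_Rplus (f g : R -> R) x :
  continuous f x -> continuous g x -> continuous (fun t => f t + g t) x.
Proof. exact (filterlim_Rplus f g (f x) (g x)). Qed.

Lemma continuous_Rmult (f g : R -> R) x :
  continuous f x -> continuous g x -> continuous (fun t => f t * g t) x.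
Proof. exact (filterlim_Rmult f g (f x) (g x)). Qed.

Lemma energy_rate_le (q M v0 v1 v2 v3 : R) :
  Rabs q <= M ->
  2 * (v0 * v1 + v1 * v2 + v2 * v3 - q * v0 * v3)
  <= (2 + M) * (v0 ^ 2 + v1 ^ 2 + v2 ^ 2 + v3 ^ 2).
Proof.
  intros Hq.
  assert (- M <= q <= M) by (generalize (Rle_abs q) (Rle_abs (- q)); rewrite Rabs_Ropp; lra).
  assert (0 <= (M - q) * (v0 - v3) ^ 2) by (apply Rmult_le_pos; [lra | apply pow2_ge_0]).
  assert (0 <= (M + q) * (v0 + v3) ^ 2) by (apply Rmult_le_pos; [lra | apply pow2_ge_0]).
  assert (0 <= M * (v1 ^ 2 + v2 ^ 2)) by (apply Rmult_le_pos; [lra | nra]).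
  generalize (pow2_ge_0 (v0 - v1)) (pow2_ge_0 (v1 - v2)) (pow2_ge_0 (v2 - v3))
    (pow2_ge_0 v1) (pow2_ge_0 v2).
  nra.
Qed.

Section Energy.

Variables (a b M : R) (q w0 w1 w2 w3 : R -> R).

Hypothesis Hw : forall x, a < x ->
  is_derive w0 x (w1 x) /\ is_derive w1 x (w2 x) /\ is_derive w2 x (w3 x) /\ continuous w3 x.
Hypothesis Hw3 : forall x, a < x -> x <> b -> is_derive w3 x (- (q x * w0 x)).
Hypothesis Hq : forall x, Rabs (q x) <= M.

Let energy x := (w0 x ^ 2 + w1 x ^ 2 + w2 x ^ 2 + w3 x ^ 2) * exp (- ((2 + M) * x)).

Lemma filterlim_energy {F : (R -> Prop) -> Prop} {FF : Filter F} l0 l1 l2 l3 x0 :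
  filterlim w0 F (locally l0) -> filterlim w1 F (locally l1) ->
  filterlim w2 F (locally l2) -> filterlim w3 F (locally l3) ->
  filterlim (fun x => x) F (locally x0) ->
  filterlim energy F (locally ((l0 ^ 2 + l1 ^ 2 + l2 ^ 2 + l3 ^ 2) * exp (- ((2 + M) * x0)))).
Proof.
  intros L0 L1 L2 L3 Lx.
  assert (Lsq : forall w l, filterlim w F (locally l) ->
    filterlim (fun x => w x ^ 2) F (locally (l ^ 2))).
  { intros w l Lw. replace (l ^ 2) with (l * l) by ring.
    apply (filterlim_ext (fun x => w x * w x)); [intros; ring |].
    exact (filterlim_Rmult _ _ _ _ Lw Lw). }
  apply filterlim_Rmult.
  - repeat apply filterlim_Rplus; apply Lsq; assumption.
  - apply (filterlim_comp _ _ _ (fun x => x) (fun y => exp (- ((2 + M) * y))) F (locally x0));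
      [exact Lx |].
    apply (@ex_derive_continuous R_AbsRing R_NormedModule (fun y => exp (- ((2 + M) * y)))).
    auto_derive. exact I.
Qed.

Lemma energy_continuous x : a < x -> continuity_pt energy x.
Proof.
  intros Hx. destruct (Hw x Hx) as [D0 [D1 [D2 C3]]].
  assert (Cd : forall (f : R -> R) df, is_derive f x df -> continuous f x).
  { intros f df Hd. apply (@ex_derive_continuous R_AbsRing R_NormedModule). exists df. exact Hd. }
  apply continuity_pt_filterlim, filterlim_energy;
    [exact (Cd _ _ D0) | exact (Cd _ _ D1) | exact (Cd _ _ D2) | exact C3 | apply filterlim_id].
Qed.

Let energy_rate x :=
  (2 * (w0 x * w1 x + w1 x * w2 x + w2 x * w3 x - q x * w0 x * w3 x)
   - (2 + M) * (w0 x ^ 2 + w1 x ^ 2 + w2 x ^ 2 + w3 x ^ 2)) * exp (- ((2 + M) * x)).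

Lemma is_derive_energy x : a < x -> x <> b -> is_derive energy x (energy_rate x).
Proof.
  intros Hx Hxb. destruct (Hw x Hx) as [D0 [D1 [D2 _]]]. pose proof (Hw3 x Hx Hxb) as D3.
  unfold energy. auto_derive.
  - repeat split; eexists; eassumption.
  - rewrite (is_derive_unique (fun t : R => w0 t) _ _ D0),
      (is_derive_unique (fun t : R => w1 t) _ _ D1),
      (is_derive_unique (fun t : R => w2 t) _ _ D2),
      (is_derive_unique (fun t : R => w3 t) _ _ D3).
    unfold energy_rate. ring.
Qed.

Lemma energy_nonincreasing x y : a < x -> x <= y -> energy y <= energy x.
Proof.
  apply (nonincreasing_of_derive_nonpos energy energy_rate a b energy_continuous is_derive_energy).
  intros t _. unfold energy_rate.
  assert (0 < exp (- ((2 + M) * t))) by apply exp_pos.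
  pose proof (energy_rate_le _ _ (w0 t) (w1 t) (w2 t) (w3 t) (Hq t)). nra.
Qed.

Hypotheses (L0 : filterlim w0 (at_right a) (locally 0))
  (L1 : filterlim w1 (at_right a) (locally 0))
  (L2 : filterlim w2 (at_right a) (locally 0))
  (L3 : filterlim w3 (at_right a) (locally 0)).

Lemma ode4_zero_of_zero_data y : a < y -> w0 y = 0 /\ w1 y = 0 /\ w2 y = 0 /\ w3 y = 0.
Proof.
  intros Hy.
  assert (Hlim : filterlim energy (at_right a)
    (locally ((0 ^ 2 + 0 ^ 2 + 0 ^ 2 + 0 ^ 2) * exp (- ((2 + M) * a))))).
  { apply filterlim_energy; try assumption.
    apply (filterlim_filter_le_1 _ (filter_le_within _)), filterlim_id. }
  replace ((0 ^ 2 + 0 ^ 2 + 0 ^ 2 + 0 ^ 2) * exp (- ((2 + M) * a))) with 0 in Hlim by ring.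
  assert (Hle : energy y <= 0).
  { apply (le_of_nonincreasing_at_right energy a); [exact Hy | | exact Hlim].
    intros x Hx Hxy. exact (energy_nonincreasing x y Hx Hxy). }
  unfold energy in Hle. pose proof (exp_pos (- ((2 + M) * y))).
  assert (Hsum : w0 y ^ 2 + w1 y ^ 2 + w2 y ^ 2 + w3 y ^ 2 <= 0) by nra.
  generalize (pow2_ge_0 (w0 y)) (pow2_ge_0 (w1 y)) (pow2_ge_0 (w2 y)) (pow2_ge_0 (w3 y)).
  intros. repeat split; nra.
Qed.

End Energy.

Lemma filterlim_Rminus_same {T} {F : (T -> Prop) -> Prop} {FF : Filter F} (f g : T -> R) l :
  filterlim f F (locally l) -> filterlim g F (locally l) ->
  filterlim (fun t => f t - g t) F (locally 0).
Proof.
  intros Hf Hg. replace 0 with (l + - l) by ring.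
  apply (filterlim_Rplus f (fun t => - g t)); [exact Hf |].
  exact (filterlim_comp _ _ _ g Ropp _ _ _ Hg (filterlim_opp l)).
Qed.

Lemma is_solution_unique a b A B al0 al1 al2 al3 u u1 u2 u3 v v1 v2 v3 :
  0 <= A -> 0 <= B ->
  is_solution a b A B al0 al1 al2 al3 u u1 u2 u3 ->
  is_solution a b A B al0 al1 al2 al3 v v1 v2 v3 ->
  forall x, a < x -> u x = v x /\ u1 x = v1 x /\ u2 x = v2 x /\ u3 x = v3 x.
Proof.
  intros HA HB [Du [Lu0 [Lu1 [Lu2 [Lu3 [Du3 [Eu0 [Eu1 [Eu2 Eu3]]]]]]]]]
    [Dv [Lv0 [Lv1 [Lv2 [Lv3 [Dv3 [Ev0 [Ev1 [Ev2 Ev3]]]]]]]]] x Hx.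
  rewrite Eu0 in Lu0. rewrite Eu1 in Lu1. rewrite Eu2 in Lu2. rewrite Eu3 in Lu3.
  rewrite Ev0 in Lv0. rewrite Ev1 in Lv1. rewrite Ev2 in Lv2. rewrite Ev3 in Lv3.
  assert (HQ : forall t, Rabs (Q0 a b A B t) <= A + B).
  { intros t. unfold Q0. destruct (Rlt_dec t b);
      [rewrite Rabs_pos_eq | rewrite Rabs_Ropp, Rabs_pos_eq]; lra. }
  destruct (ode4_zero_of_zero_data a b (A + B) (Q0 a b A B)
    (fun t => u t - v t) (fun t => u1 t - v1 t) (fun t => u2 t - v2 t) (fun t => u3 t - v3 t))
    with (y := x) as [E0 [E1 [E2 E3]]];
    [| | exact HQ | eapply filterlim_Rminus_same; eassumption .. | exact Hx | lra].
  - intros t Ht. destruct (Du t Ht) as [Du0 [Du1 [Du2 Cu3]]].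
    destruct (Dv t Ht) as [Dv0 [Dv1 [Dv2 Cv3]]].
    split; [|split; [|split]].
    + exact (is_derive_minus u v t _ _ Du0 Dv0).
    + exact (is_derive_minus u1 v1 t _ _ Du1 Dv1).
    + exact (is_derive_minus u2 v2 t _ _ Du2 Dv2).
    + exact (continuous_minus u3 v3 t Cu3 Cv3).
  - intros t Ht Htb.
    replace (- (Q0 a b A B t * (u t - v t)))
      with (- (Q0 a b A B t * u t) - - (Q0 a b A B t * v t)) by ring.
    exact (is_derive_minus u3 v3 t _ _ (Du3 t Ht Htb) (Dv3 t Ht Htb)).
Qed.

Definition pos_part (x : R) : R := (x + Rabs x) / 2.

Lemma pos_part_id x : 0 <= x -> pos_part x = x.
Proof. intros Hx. unfold pos_part. rewrite Rabs_pos_eq; lra. Qed.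

Lemma pos_part_0 x : x <= 0 -> pos_part x = 0.
Proof. intros Hx. unfold pos_part. rewrite Rabs_left1; lra. Qed.

(* The positive part keeps the defect continuous in [y0] while making it [C * y1 * y2]
   wherever [y0 <= 0]. *)
Definition matching_defect (C S y0 y1 y2 y3 : R) : R :=
  C * (y1 * y2 + pos_part y0 * y3) + 2 * S * y2 * sqrt (y0 * y2).

Lemma continuous_matching_defect (C S : R) (v0 v1 v2 v3 : R -> R) mu :
  continuous v0 mu -> continuous v1 mu -> continuous v2 mu -> continuous v3 mu ->
  continuous (fun t => matching_defect C S (v0 t) (v1 t) (v2 t) (v3 t)) mu.
Proof.
  intros C0 C1 C2 C3. unfold matching_defect, pos_part.
  apply continuous_Rplus; apply continuous_Rmult.
  - apply continuous_const.
  - apply continuous_Rplus; apply continuous_Rmult; [exact C1 | exact C2 | | exact C3].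
    apply continuous_Rmult; [| apply continuous_const].
    apply continuous_Rplus; [exact C0 | apply continuous_Rabs_comp, C0].
  - apply continuous_Rmult; [apply continuous_Rmult; apply continuous_const | exact C2].
  - apply continuous_sqrt_comp, continuous_Rmult; [exact C0 | exact C2].
Qed.

Lemma matching_of_defect_root C S y0 y1 y2 y3 :
  0 < y0 -> 0 < y2 -> matching_defect C S y0 y1 y2 y3 = 0 ->
  exists kap, 0 < kap /\ y2 / kap ^ 2 = y0 /\ (y1 / kap + y3 / kap ^ 3) * C + 2 * y0 * S = 0.
Proof.
  intros H0 H2 Hroot.
  set (kap := sqrt (y2 / y0)).
  assert (Hkap : 0 < kap) by (apply sqrt_lt_R0, Rdiv_lt_0_compat; assumption).
  assert (Hkap2 : y2 = kap ^ 2 * y0).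
  { unfold kap. rewrite <- Rsqr_pow2, Rsqr_sqrt by (apply Rlt_le, Rdiv_lt_0_compat; assumption).
    field. lra. }
  assert (Hsq : sqrt (y0 * y2) = y0 * kap).
  { rewrite <- (sqrt_square (y0 * kap)) by nra. f_equal. rewrite Hkap2. ring. }
  exists kap. split; [exact Hkap | split].
  - rewrite Hkap2. field. lra.
  - unfold matching_defect in Hroot. rewrite pos_part_id, Hsq, Hkap2 in Hroot by lra.
    apply (Rmult_eq_reg_l (kap ^ 3 * y0)); [| apply Rgt_not_eq; nra].
    rewrite Rmult_0_r, <- Hroot. field. lra.
Qed.

Lemma exists_matching_scale (v0 v1 v2 v3 : R -> R) (C S : R) :
  0 < C -> 0 < S ->
  (forall mu, continuous v0 mu) -> (forall mu, continuous v1 mu) ->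
  (forall mu, continuous v2 mu) -> (forall mu, continuous v3 mu) ->
  0 < v0 0 -> v2 0 = 0 -> v3 0 < 0 ->
  (forall mu, 0 < mu -> 0 < v1 mu /\ 0 < v2 mu) ->
  (exists mu1, 0 < mu1 /\ v0 mu1 <= 0) ->
  exists mu kap, 0 < mu /\ 0 < kap /\ v2 mu / kap ^ 2 = v0 mu /\
    (v1 mu / kap + v3 mu / kap ^ 3) * C + 2 * v0 mu * S = 0.
Proof.
  intros HC HS C0 C1 C2 C3 H00 H20 H30 Hpos [mu1 [Hmu1 Hv0]].
  set (G mu := matching_defect C S (v0 mu) (v1 mu) (v2 mu) (v3 mu)).
  assert (HG : continuity G).
  { intros mu. apply continuity_pt_filterlim, continuous_matching_defect; auto. }
  assert (G0 : G 0 < 0).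
  { unfold G, matching_defect. rewrite H20, pos_part_id by lra.
    assert (0 < C * v0 0) by nra. nra. }
  assert (G1 : 0 < G mu1).
  { destruct (Hpos mu1 Hmu1). unfold G, matching_defect.
    rewrite (pos_part_0 _ Hv0), (sqrt_neg_0 (v0 mu1 * v2 mu1)) by nra.
    assert (0 < v1 mu1 * v2 mu1) by nra. nra. }
  destruct (IVT G 0 mu1 HG Hmu1 G0 G1) as [z [Hz Gz]].
  assert (Hz0 : 0 < z) by (destruct (Req_dec z 0) as [-> | ]; lra).
  destruct (Hpos z Hz0) as [H1z H2z].
  assert (H0z : 0 < v0 z).
  { apply Rnot_le_lt. intros Hle. unfold G, matching_defect in Gz.
    rewrite (pos_part_0 _ Hle), (sqrt_neg_0 (v0 z * v2 z)) in Gz by nra.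
    assert (0 < v1 z * v2 z) by nra. nra. }
  destruct (matching_of_defect_root C S _ _ _ _ H0z H2z Gz) as [kap Hkap].
  exists z, kap. split; [exact Hz0 | exact Hkap].
Qed.

Lemma cosh_pos t : 0 < cosh t.
Proof. unfold cosh. generalize (exp_pos t) (exp_pos (- t)). lra. Qed.

Lemma sinh_pos t : 0 < t -> 0 < sinh t.
Proof. intros Ht. rewrite <- sinh_0. apply sinh_lt, Ht. Qed.

Section Construction.

Variables al0 al1 al2 al3 : R.
Hypotheses (h0 : 0 < al0) (h1 : 0 < al1) (h2 : 0 < al2) (h3 : 0 < al3).

(* With [b - a = 2 pi mu] and [A = 4 / mu ^ 4], [v_j mu / mu ^ j] is the [j]-th derivative
   at [b] of the solution on [[a, b]]. *)
Let v0 mu := osc al0 (al1 * mu) (al2 * mu ^ 2) (al3 * mu ^ 3) (2 * PI).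
Let v1 mu := osc (al1 * mu) (al2 * mu ^ 2) (al3 * mu ^ 3) (-4 * al0) (2 * PI).
Let v2 mu := osc (al2 * mu ^ 2) (al3 * mu ^ 3) (-4 * al0) (-4 * (al1 * mu)) (2 * PI).
Let v3 mu := osc (al3 * mu ^ 3) (-4 * al0) (-4 * (al1 * mu)) (-4 * (al2 * mu ^ 2)) (2 * PI).

Lemma exists_osc_matching_scale :
  exists mu kap, 0 < mu /\ 0 < kap /\ v2 mu / kap ^ 2 = v0 mu /\
    (v1 mu / kap + v3 mu / kap ^ 3) * cosh (PI / 2) + 2 * v0 mu * sinh (PI / 2) = 0.
Proof.
  pose proof (cosh_pos (2 * PI)) as HC.
  assert (HS : 0 < sinh (2 * PI)) by (apply sinh_pos; pose proof PI_RGT_0; lra).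
  set (ch := cosh (2 * PI)) in *. set (sh := sinh (2 * PI)) in *.
  apply exists_matching_scale;
    [apply cosh_pos | apply sinh_pos, PI2_RGT_0 | .. ];
    try (intros mu; apply (@ex_derive_continuous R_AbsRing R_NormedModule);
         unfold v0, v1, v2, v3, osc; auto_derive; exact I);
    unfold v0, v1, v2, v3; rewrite ?osc_2PI; fold ch sh.
  - ring_simplify. nra.
  - field.
  - ring_simplify. nra.
  - intros mu Hmu. rewrite !osc_2PI. fold ch sh.
    assert (0 < mu ^ 2) by (apply pow_lt, Hmu). assert (0 < mu ^ 3) by (apply pow_lt, Hmu).
    assert (0 < al0 * sh) by nra. assert (0 < al1 * mu) by nra.
    assert (0 < al2 * mu ^ 2) by nra. assert (0 < al3 * mu ^ 3) by nra.
    split; nra.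
  - (* [v0 mu = ch al0 + sh al1 mu / 2 - sh al3 mu ^ 3 / 4] is nonpositive as soon as
       [1 <= mu] and [ch al0 + sh al1 / 2 <= sh al3 mu ^ 2 / 4]. *)
    set (s := 4 * (ch * al0 + sh / 2 * al1) / (sh * al3)).
    assert (Hs : 0 < s) by (unfold s; apply Rdiv_lt_0_compat; nra).
    assert (Es : sh * al3 * s / 4 = ch * al0 + sh / 2 * al1) by (unfold s; field; lra).
    exists (1 + s). split; [lra |]. rewrite osc_2PI. fold ch sh.
    assert (Hsq : s <= (1 + s) ^ 2) by nra.
    assert (ch * al0 + sh / 2 * al1 <= sh * al3 * (1 + s) ^ 2 / 4).
    { rewrite <- Es. apply Rmult_le_compat_r; [lra |]. apply Rmult_le_compat_l; nra. }
    assert (0 <= ch * al0) by nra.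
    nra.
Qed.

Lemma exists_solution_u1_u3_vanish a :
  exists b A B, a < b /\ 0 < A /\ 0 < B /\
    exists u u1 u2 u3, is_solution a b A B al0 al1 al2 al3 u u1 u2 u3 /\
      exists zeta, b < zeta /\ u1 zeta = 0 /\ u3 zeta = 0.
Proof.
  destruct exists_osc_matching_scale as [mu [kap [Hmu [Hkap [Hy2 Hy13]]]]].
  set (m := / mu). set (k := kap * m). set (b := a + 2 * PI * mu).
  assert (Hm : 0 < m) by (apply Rinv_0_lt_compat, Hmu).
  assert (Hk : 0 < k) by (apply Rmult_lt_0_compat; assumption).
  assert (Hab : a < b) by (unfold b; pose proof PI_RGT_0; nra).
  assert (Hb : m * (b - a) = 2 * PI) by (unfold m, b; field; lra).
  pose proof (is_ode4_sol_rescale _ m a _ _ _ _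
    (is_ode4_sol_osc al0 (al1 * mu) (al2 * mu ^ 2) (al3 * mu ^ 3))) as HA.
  pose proof (is_ode4_sol_rescale _ k b _ _ _ _
    (is_ode4_sol_hyp (v0 mu) (v1 mu / kap) (v2 mu / kap ^ 2) (v3 mu / kap ^ 3))) as HB.
  replace (-1 * k ^ 4) with (- k ^ 4) in HB by ring.
  exists b, (4 * m ^ 4), (k ^ 4).
  split; [exact Hab | split; [pose proof (pow_lt m 4 Hm); lra | split; [apply pow_lt, Hk |]]].
  eexists _, _, _, _. split.
  - apply (is_solution_glue _ _ _ _ _ _ _ _ _ _ _ _ _ _ _ _ Hab HA HB); unfold rescale;
      rewrite ?Hb, ?Rminus_diag, ?Rmult_0_r, ?hyp_0, ?osc_0; unfold k, m, v0, v1, v2, v3;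
      field; lra.
  - assert (Hz : k * (b + PI / (2 * k) - b) = PI / 2) by (field; lra).
    assert (0 < PI / (2 * k)) by (apply Rdiv_lt_0_compat; [exact PI_RGT_0 | lra]).
    exists (b + PI / (2 * k)). split; [lra |].
    unfold glue. destruct (Rlt_dec (b + PI / (2 * k)) b) as [Hlt | _]; [lra |].
    unfold rescale. rewrite Hz.
    destruct (hyp_PI2_critical _ _ _ _ Hy2 Hy13) as [Z1 Z3].
    rewrite Z1, Z3. split; ring.
Qed.

End Construction.

Theorem proposition1 (a al0 al1 al2 al3 : R)
  (h0 : 0 < al0) (h1 : 0 < al1) (h2 : 0 < al2) (h3 : 0 < al3) :
  exists b A B, a < b /\ 0 < A /\ 0 < B /\
    (exists u u1 u2 u3, is_solution a b A B al0 al1 al2 al3 u u1 u2 u3) /\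
    (forall u u1 u2 u3, is_solution a b A B al0 al1 al2 al3 u u1 u2 u3 ->
       exists zeta, b < zeta /\ u1 zeta = 0 /\ u3 zeta = 0).
Proof.
  destruct (exists_solution_u1_u3_vanish al0 al1 al2 al3 h0 h1 h2 h3 a)
    as [b [A [B [Hab [HA [HB [u [u1 [u2 [u3 [Hu [zeta [Hzeta [Z1 Z3]]]]]]]]]]]]]].
  exists b, A, B. split; [exact Hab | split; [exact HA | split; [exact HB | split]]].
  - exists u, u1, u2, u3. exact Hu.
  - intros v v1 v2 v3 Hv. exists zeta. split; [exact Hzeta |].
    destruct (is_solution_unique a b A B al0 al1 al2 al3 v v1 v2 v3 u u1 u2 u3
      (Rlt_le _ _ HA) (Rlt_le _ _ HB) Hv Hu zeta ltac:(lra)) as [_ [E1 [_ E3]]].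
    rewrite E1, E3. split; assumption.
Qed.
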